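(* For every positive integer $n$, $$\sum_{j=1}^{n}\csc^6\left(\frac{\pi(2j-1)}{4n}\right) = \frac{8n^2(8n^4+5n^2+2)}{15}.$$ *)

From Stdlib Require Export Reals.
Open Scope R_scope.

Definition csc (x : R) : R := 1 / sin x.

From Stdlib Require Import Reals Lra Lia.
From Coquelicot Require Import Coquelicot.
Open Scope R_scope.

(* For m >= 1 and sin (m x) <> 0 the m points x + j pi / m (j < m) satisfy
   sum_j cot (x + j pi / m) = m cot (m x): multiplying by sin (m x) turns each
   cotangent into a sum of cosines of frequencies 2k/m, and summing over j kills
   every frequency but k = 0.  Both sides are smooth on the open set
   sin (m x) <> 0, so differentiating five times gives the same identity for the
   derivatives of cot, whose odd ones are polynomials in csc^2.  At x = pi / (2m)
   this is a triangular linear system for the sums of csc^2, csc^4 and csc^6 over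
   the odd multiples of pi / (2m), giving sum csc^6 = (2m^6 + 5m^4 + 8m^2) / 15.
   For m = 2n these points are symmetric about pi / 2, so the sum over the first
   n of them is half of that. *)

(* [sumR f n] is [f 0 + ... + f (n - 1)]; Stdlib's [sum_f_R0 f n] has [n + 1] terms. *)
Fixpoint sumR (f : nat -> R) (n : nat) : R :=
  match n with O => 0 | S k => sumR f k + f k end.

Lemma sumR_ext f g n : (forall j, (j < n)%nat -> f j = g j) -> sumR f n = sumR g n.
Proof.
  induction n as [|n IH]; intros Hfg; simpl; [reflexivity|].
  rewrite IH by (intros; apply Hfg; lia).
  rewrite Hfg by lia; reflexivity.
Qed.

Lemma sumR_plus f g n : sumR (fun j => f j + g j) n = sumR f n + sumR g n.
Proof. induction n as [|n IH]; simpl; [|rewrite IH]; ring. Qed.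

Lemma sumR_opp f n : sumR (fun j => - f j) n = - sumR f n.
Proof. induction n as [|n IH]; simpl; [|rewrite IH]; ring. Qed.

Lemma sumR_minus f g n : sumR (fun j => f j - g j) n = sumR f n - sumR g n.
Proof. unfold Rminus. rewrite sumR_plus, sumR_opp. reflexivity. Qed.

Lemma sumR_scal c f n : sumR (fun j => c * f j) n = c * sumR f n.
Proof. induction n as [|n IH]; simpl; [|rewrite IH]; ring. Qed.

Lemma sumR_const c n : sumR (fun _ => c) n = INR n * c.
Proof. induction n as [|n IH]; simpl sumR; [|rewrite IH, S_INR]; simpl; ring. Qed.

Lemma sumR_swap (f : nat -> nat -> R) m n :
  sumR (fun j => sumR (fun k => f j k) n) m = sumR (fun k => sumR (fun j => f j k) m) n.
Proof.
  induction m as [|m IH]; simpl.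
  - rewrite sumR_const; ring.
  - rewrite IH, sumR_plus; reflexivity.
Qed.

Lemma sumR_telescope b n : sumR (fun k => b k - b (S k)) n = b O - b n.
Proof. induction n as [|n IH]; simpl; [|rewrite IH]; ring. Qed.

Lemma sumR_split_first f n :
  (0 < n)%nat -> sumR f n = f O + sumR (fun j => f (S j)) (n - 1).
Proof.
  intros Hn. replace n with (S (n - 1)) at 1 by lia.
  generalize (n - 1)%nat; intros N.
  induction N as [|N IH]; simpl in *; [|rewrite IH]; ring.
Qed.

Lemma sumR_add f m n : sumR f (m + n) = sumR f m + sumR (fun j => f (m + j)%nat) n.
Proof.
  induction n as [|n IH]; simpl; rewrite ?Nat.add_0_r, ?Nat.add_succ_r; simpl; [ring|].
  rewrite IH; ring.
Qed.

Lemma sumR_rev f n : sumR (fun j => f (n - 1 - j)%nat) n = sumR f n.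
Proof.
  revert f; induction n as [|n IH]; intros f; [reflexivity|].
  rewrite sumR_split_first, Nat.sub_succ, !Nat.sub_0_r by lia; simpl sumR.
  rewrite (sumR_ext _ (fun j => f (n - 1 - j)%nat)) by (intros; f_equal; lia).
  rewrite IH; ring.
Qed.

Lemma sumR_double_of_reflect f n :
  (forall j, (j < n)%nat -> f (n + j)%nat = f (n - 1 - j)%nat) ->
  sumR f (2 * n) = 2 * sumR f n.
Proof.
  intros Hf. replace (2 * n)%nat with (n + n)%nat by lia.
  rewrite sumR_add, (sumR_ext _ _ n Hf), sumR_rev; ring.
Qed.

Lemma sum_f_1_sumR g n : (0 < n)%nat -> sum_f 1 n g = sumR (fun j => g (j + 1)%nat) n.
Proof.
  intros Hn. unfold sum_f. replace n with (S (n - 1)) at 2 by lia.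
  generalize (n - 1)%nat; intros N.
  induction N as [|N IH]; simpl in *; [|rewrite IH]; ring.
Qed.

Definition cot (x : R) : R := cos x / sin x.

Lemma sin_add_nat_PI x j : sin (x + INR j * PI) = (-1) ^ j * sin x.
Proof.
  induction j as [|j IH]; [simpl; rewrite Rmult_0_l, Rplus_0_r; ring|].
  rewrite S_INR, Rmult_plus_distr_r, Rmult_1_l, <- Rplus_assoc, neg_sin, IH; simpl; ring.
Qed.

Lemma cos_add_nat_PI x j : cos (x + INR j * PI) = (-1) ^ j * cos x.
Proof.
  induction j as [|j IH]; [simpl; rewrite Rmult_0_l, Rplus_0_r; ring|].
  rewrite S_INR, Rmult_plus_distr_r, Rmult_1_l, <- Rplus_assoc, neg_cos, IH; simpl; ring.
Qed.

Lemma sin_nat_mul_eq_0 x m : sin x = 0 -> sin (INR m * x) = 0.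
Proof.
  intros Hx. induction m as [|m IH]; [simpl; rewrite Rmult_0_l; apply sin_0|].
  rewrite S_INR, Rmult_plus_distr_r, Rmult_1_l, sin_plus, IH, Hx; ring.
Qed.

Lemma sin_nat_PI_div_neq_0 k m : (0 < k < m)%nat -> sin (INR k * PI / INR m) <> 0.
Proof.
  intros Hkm. apply Rgt_not_eq, sin_gt_0.
  - apply Rdiv_lt_0_compat; [apply Rmult_lt_0_compat; [apply lt_0_INR; lia | apply PI_RGT_0]|].
    apply lt_0_INR; lia.
  - assert (Hk : INR k < INR m) by (apply lt_INR; lia).
    assert (HM : 0 < INR m) by (apply lt_0_INR; lia).
    apply (Rmult_lt_reg_r (INR m)); [exact HM|].
    unfold Rdiv; rewrite Rmult_assoc, Rinv_l by lra.
    pose proof PI_RGT_0; nra.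
Qed.

Lemma sum_cos_arith_eq_0 A b m r :
  INR m * b = 2 * INR r * PI -> sin (b / 2) <> 0 ->
  sumR (fun j => cos (A - INR j * b)) m = 0.
Proof.
  intros Hperiod Hb.
  set (c j := sin (A - INR j * b + b / 2)).
  apply (Rmult_eq_reg_l (2 * sin (b / 2))); [|lra].
  rewrite <- sumR_scal, Rmult_0_r.
  rewrite (sumR_ext _ (fun j => c j - c (S j))).
  2:{ intros j _; unfold c; rewrite S_INR.
      replace (A - (INR j + 1) * b + b / 2) with (A - INR j * b - b / 2) by field.
      rewrite (sin_plus (A - INR j * b)), (sin_minus (A - INR j * b)); ring. }
  rewrite sumR_telescope; unfold c.
  rewrite <- (sin_period (A - INR m * b + b / 2) r).
  replace (A - INR m * b + b / 2 + 2 * INR r * PI) with (A - INR 0 * b + b / 2)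
    by (simpl; lra).
  ring.
Qed.

Lemma cot_mul_sin x m :
  sin x <> 0 -> cot x * sin (INR m * x) = sumR (fun k => cos ((INR m - 2 * INR k) * x)) m.
Proof.
  intros Hx.
  set (b k := sin ((INR m + 1 - 2 * INR k) * x)).
  apply (Rmult_eq_reg_l (2 * sin x)); [|lra].
  rewrite <- sumR_scal, (sumR_ext _ (fun k => b k - b (S k))).
  2:{ intros k _; unfold b; rewrite S_INR.
      replace ((INR m + 1 - 2 * INR k) * x) with ((INR m - 2 * INR k) * x + x) by ring.
      replace ((INR m + 1 - 2 * (INR k + 1)) * x) with ((INR m - 2 * INR k) * x - x) by ring.
      rewrite sin_plus, sin_minus; ring. }
  rewrite sumR_telescope; unfold b, cot; simpl INR.
  replace ((INR m + 1 - 2 * 0) * x) with (INR m * x + x) by ring.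
  replace ((INR m + 1 - 2 * INR m) * x) with (- (INR m * x - x)) by ring.
  rewrite sin_neg, sin_plus, sin_minus; field; exact Hx.
Qed.

Lemma is_derive_translate (g : R -> R) (l c x : R) :
  is_derive g (x + c) l -> is_derive (fun y => g (y + c)) x l.
Proof.
  intros Hg. rewrite <- (Rmult_1_l l).
  apply (is_derive_comp g (fun y => y + c) x l 1 Hg).
  auto_derive; [exact I | ring].
Qed.

Lemma is_derive_scale (g : R -> R) (l a x : R) :
  is_derive g (a * x) l -> is_derive (fun y => g (a * y)) x (a * l).
Proof.
  intros Hg. apply (is_derive_comp g (fun y => a * y) x l a Hg).
  auto_derive; [exact I | ring].
Qed.

Lemma is_derive_sumR (f : nat -> R -> R) (f' : nat -> R) n x :
  (forall j, (j < n)%nat -> is_derive (f j) x (f' j)) ->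
  is_derive (fun y => sumR (fun j => f j y) n) x (sumR f' n).
Proof.
  induction n as [|n IH]; intros Hf; simpl.
  - apply (is_derive_const 0).
  - apply (is_derive_plus (fun y => sumR (fun j => f j y) n) (f n));
      [apply IH; intros j Hj|]; apply Hf; lia.
Qed.

Lemma is_derive_eq_0_on_open (D : R -> Prop) F x l :
  open D -> D x -> (forall y, D y -> F y = 0) -> is_derive F x l -> l = 0.
Proof.
  intros HD Hx HF Hl.
  assert (H0 : is_derive F x 0).
  { apply (is_derive_ext_loc (fun _ => 0)); [|apply (is_derive_const 0)].
    apply (locally_open D); [exact HD | intros y Hy; symmetry; apply HF, Hy | exact Hx]. }
  rewrite <- (is_derive_unique _ _ _ Hl); exact (is_derive_unique _ _ _ H0).
Qed.

Lemma open_sin_nat_mul_neq_0 m : open (fun y => sin (INR m * y) <> 0).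
Proof.
  apply (open_comp (fun y => sin (INR m * y)) (fun u => u <> 0)); [|apply open_neq].
  intros x _. apply continuous_sin_comp, (ex_derive_continuous (fun y => INR m * y)).
  auto_derive; exact I.
Qed.

Definition cot_deriv1 (y : R) : R := - csc y ^ 2.
Definition cot_deriv2 (y : R) : R := 2 * cos y * csc y ^ 3.
Definition cot_deriv3 (y : R) : R := 4 * csc y ^ 2 - 6 * csc y ^ 4.
Definition cot_deriv4 (y : R) : R := 24 * cos y * csc y ^ 5 - 8 * cos y * csc y ^ 3.
Definition cot_deriv5 (y : R) : R := 120 * csc y ^ 4 - 120 * csc y ^ 6 - 16 * csc y ^ 2.

Ltac solve_cot_derive :=
  intros y Hy;
  assert (Hcos2 : cos y ^ 2 = 1 - sin y ^ 2) by (rewrite <- (sin2_cos2 y); unfold Rsqr; ring);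
  unfold cot, cot_deriv1, cot_deriv2, cot_deriv3, cot_deriv4, cot_deriv5, csc;
  auto_derive; [repeat split; exact Hy |];
  field_simplify_eq; [|exact Hy]; ring_simplify; rewrite ?Hcos2; ring.

Lemma is_derive_cot : forall y, sin y <> 0 -> is_derive cot y (cot_deriv1 y).
Proof. solve_cot_derive. Qed.
Lemma is_derive_cot_deriv1 : forall y, sin y <> 0 -> is_derive cot_deriv1 y (cot_deriv2 y).
Proof. solve_cot_derive. Qed.
Lemma is_derive_cot_deriv2 : forall y, sin y <> 0 -> is_derive cot_deriv2 y (cot_deriv3 y).
Proof. solve_cot_derive. Qed.
Lemma is_derive_cot_deriv3 : forall y, sin y <> 0 -> is_derive cot_deriv3 y (cot_deriv4 y).
Proof. solve_cot_derive. Qed.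
Lemma is_derive_cot_deriv4 : forall y, sin y <> 0 -> is_derive cot_deriv4 y (cot_deriv5 y).
Proof. solve_cot_derive. Qed.

Definition sum_shifts (g : R -> R) (m : nat) (x : R) : R :=
  sumR (fun j => g (x + INR j * PI / INR m)) m.

Section Shifts.

Variable m : nat.
Hypothesis m_pos : (0 < m)%nat.

Let INR_m_pos : 0 < INR m := lt_0_INR m m_pos.

Lemma sin_shift_neq_0 x j : sin (INR m * x) <> 0 -> sin (x + INR j * PI / INR m) <> 0.
Proof.
  intros Hmx Hj. apply (sin_nat_mul_eq_0 _ m) in Hj.
  replace (INR m * (x + INR j * PI / INR m)) with (INR m * x + INR j * PI) in Hj
    by (field; lra).
  rewrite sin_add_nat_PI in Hj.
  apply Rmult_integral in Hj as [Hj|Hj]; [|exact (Hmx Hj)].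
  apply (pow_nonzero (-1) j); [lra | exact Hj].
Qed.

Lemma cot_shift_mul_sin x j : sin (INR m * x) <> 0 ->
  cot (x + INR j * PI / INR m) * sin (INR m * x) =
  sumR (fun k => cos ((INR m - 2 * INR k) * x - INR j * (2 * INR k * PI / INR m))) m.
Proof.
  intros Hmx. set (t := x + INR j * PI / INR m).
  assert (Hsign : (-1) ^ j * (-1) ^ j = 1)
    by (rewrite <- Rpow_mult_distr; replace (-1 * -1) with 1 by ring; apply pow1).
  (* The shift by j pi / m multiplies sin (m .) and every cos ((m - 2k) .) by (-1)^j. *)
  transitivity ((-1) ^ j * (cot t * sin (INR m * t))).
  { replace (INR m * t) with (INR m * x + INR j * PI) by (unfold t; field; lra).
    rewrite sin_add_nat_PI.
    transitivity ((-1) ^ j * (-1) ^ j * (cot t * sin (INR m * x))); [rewrite Hsign|]; ring. }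
  rewrite cot_mul_sin by apply sin_shift_neq_0, Hmx.
  rewrite <- sumR_scal. apply sumR_ext; intros k _.
  replace ((INR m - 2 * INR k) * t)
    with ((INR m - 2 * INR k) * x - INR j * (2 * INR k * PI / INR m) + INR j * PI)
    by (unfold t; field; lra).
  rewrite cos_add_nat_PI, <- Rmult_assoc, Hsign; ring.
Qed.

Lemma sum_shifts_cot x :
  sin (INR m * x) <> 0 -> sum_shifts cot m x = INR m * cot (INR m * x).
Proof.
  intros Hmx.
  apply (Rmult_eq_reg_r (sin (INR m * x))); [|exact Hmx].
  unfold sum_shifts. rewrite Rmult_comm, <- sumR_scal.
  rewrite (sumR_ext _ (fun j => sumR (fun k =>
      cos ((INR m - 2 * INR k) * x - INR j * (2 * INR k * PI / INR m))) m))
    by (intros j _; rewrite Rmult_comm; apply cot_shift_mul_sin, Hmx).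
  rewrite sumR_swap.
  rewrite (sumR_split_first _ m m_pos).
  rewrite (sumR_ext _ (fun _ => cos (INR m * x)))
    by (intros j _; f_equal; simpl; field; lra).
  rewrite (sumR_ext _ (fun _ => 0) (m - 1)).
  2:{ intros k Hk. apply (sum_cos_arith_eq_0 _ _ m (S k)); [field; lra|].
      replace (2 * INR (S k) * PI / INR m / 2) with (INR (S k) * PI / INR m) by (field; lra).
      apply sin_nat_PI_div_neq_0; lia. }
  rewrite !sumR_const; unfold cot; field; exact Hmx.
Qed.

Lemma sum_shifts_derive (g g' : R -> R) c :
  (forall y, sin y <> 0 -> is_derive g y (g' y)) ->
  (forall x, sin (INR m * x) <> 0 -> sum_shifts g m x = c * g (INR m * x)) ->
  forall x, sin (INR m * x) <> 0 -> sum_shifts g' m x = c * INR m * g' (INR m * x).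
Proof.
  intros Hg Hsum x Hmx.
  set (F y := sum_shifts g m y - c * g (INR m * y)).
  assert (HF : is_derive F x (sum_shifts g' m x - c * (INR m * g' (INR m * x)))).
  { apply (is_derive_minus (sum_shifts g m) (fun y => c * g (INR m * y))).
    - apply is_derive_sumR; intros j _.
      apply is_derive_translate, Hg, sin_shift_neq_0, Hmx.
    - apply (is_derive_scal (fun y => g (INR m * y))), is_derive_scale, Hg, Hmx. }
  apply (is_derive_eq_0_on_open _ F x _ (open_sin_nat_mul_neq_0 m) Hmx) in HF; [lra|].
  intros y Hy; unfold F; rewrite Hsum by exact Hy; ring.
Qed.

Lemma sum_shifts_cot_derivs x : sin (INR m * x) <> 0 ->
  sum_shifts cot_deriv1 m x = INR m ^ 2 * cot_deriv1 (INR m * x) /\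
  sum_shifts cot_deriv3 m x = INR m ^ 4 * cot_deriv3 (INR m * x) /\
  sum_shifts cot_deriv5 m x = INR m ^ 6 * cot_deriv5 (INR m * x).
Proof.
  pose proof (sum_shifts_derive _ _ _ is_derive_cot sum_shifts_cot) as D1.
  pose proof (sum_shifts_derive _ _ _ is_derive_cot_deriv1 D1) as D2.
  pose proof (sum_shifts_derive _ _ _ is_derive_cot_deriv2 D2) as D3.
  pose proof (sum_shifts_derive _ _ _ is_derive_cot_deriv3 D3) as D4.
  pose proof (sum_shifts_derive _ _ _ is_derive_cot_deriv4 D4) as D5.
  intros Hmx. rewrite D1, D3, D5 by exact Hmx. repeat split; ring.
Qed.

End Shifts.

Lemma sum_csc6_odd_multiples m : (0 < m)%nat ->
  sumR (fun j => csc ((2 * INR j + 1) * PI / (2 * INR m)) ^ 6) m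
  = (2 * INR m ^ 6 + 5 * INR m ^ 4 + 8 * INR m ^ 2) / 15.
Proof.
  intros Hm. assert (HM : 0 < INR m) by (apply lt_0_INR; exact Hm).
  set (x := PI / (2 * INR m)).
  assert (Hmx : INR m * x = PI / 2) by (unfold x; field; lra).
  assert (Hcsc : csc (PI / 2) = 1) by (unfold csc; rewrite sin_PI2; field).
  destruct (sum_shifts_cot_derivs m Hm x) as [E2 [E4 E6]]; [rewrite Hmx, sin_PI2; lra|].
  unfold sum_shifts, cot_deriv1, cot_deriv3, cot_deriv5 in E2, E4, E6.
  rewrite Hmx, Hcsc in E2, E4, E6.
  rewrite sumR_opp in E2.
  rewrite sumR_minus, !sumR_scal in E4.
  rewrite !sumR_minus, !sumR_scal in E6.
  rewrite (sumR_ext _ (fun j => csc (x + INR j * PI / INR m) ^ 6))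
    by (intros j _; unfold x; f_equal; f_equal; field; lra).
  lra.
Qed.

Theorem mainTheorem16 (n : nat) (hn : (1 <= n)%nat) :
  sum_f 1 n (fun j => (csc (PI * (2 * INR j - 1) / (4 * INR n))) ^ 6)
  = 8 * (INR n) ^ 2 * (8 * (INR n) ^ 4 + 5 * (INR n) ^ 2 + 2) / 15.
Proof.
  assert (HN : 0 < INR n) by (apply lt_0_INR; lia).
  set (f j := csc ((2 * INR j + 1) * PI / (2 * INR (2 * n))) ^ 6).
  rewrite sum_f_1_sumR by lia.
  rewrite (sumR_ext _ f)
    by (intros j _; unfold f; rewrite plus_INR, mult_INR; f_equal; f_equal; simpl; field; lra).
  assert (Hhalf : sumR f (2 * n) = 2 * sumR f n).
  { apply sumR_double_of_reflect; intros j Hj; unfold f, csc.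
    rewrite <- (sin_PI_x ((2 * INR (n - 1 - j) + 1) * PI / (2 * INR (2 * n)))).
    do 3 f_equal. rewrite !minus_INR, plus_INR, mult_INR by lia; simpl INR; field; lra. }
  pose proof (sum_csc6_odd_multiples (2 * n) ltac:(lia)) as Hall.
  fold f in Hall. rewrite mult_INR in Hall; simpl INR in Hall.
  lra.
Qed.
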